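(* Let $n\ge 2$, $N=\{1,\dots,n\}$, for each $i\in N$ let $A_i$ be a nonempty finite set, $A=\prod_{i\in N}A_i$, $u_i:A\to\mathbb{R}$, and fix $\lambda\in\mathbb{R}^n\setminus\{\mathbf 0\}$. For every $\Delta\in(0,1)$ and every $a^{[n]}\in\mathcal{A}^*_\lambda(\Delta)$, $$\frac{\partial W_\lambda}{\partial\Delta}(a^{[n]},\Delta)\le 0,$$ where the derivative is taken with respect to the second argument with $a^{[n]}$ held fixed.
   Context: For $a^{[n]}=(a^1,\dots,a^n)\in A^n$ extend indices by $a^s=a^{s-n}$ for $s\ge n+1$, and for $\Delta\in(0,1]$ define $$v_i^\Delta(a^{[n]})=\frac{\sum_{k=1}^n\Delta^{k-1}u_i(a^{i+k-1})}{\sum_{k=1}^n\Delta^{k-1}},\qquad W_\lambda(a^{[n]},\Delta)=\sum_{i=1}^n\lambda_i v_i^\Delta(a^{[n]}).$$ Let $\mathcal{A}^*_\lambda(\Delta)\subseteq A^n$ be the set of maximizers of $a^{[n]}\mapsto W_\lambda(a^{[n]},\Delta)$ over $A^n$. *)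

From HB Require Import structures.
From mathcomp Require Import all_boot all_order all_algebra.
From mathcomp Require Import all_classical all_reals all_analysis.
Set Implicit Arguments. Unset Strict Implicit. Unset Printing Implicit Defensive.
Import Order.TTheory GRing.Theory Num.Theory.
Local Open Scope ring_scope.

(* Players are 'I_n = {0,...,n-1} (0-based version of N = {1,...,n}).
   A = prod_i A_i is the type of dependent finite functions. *)
Definition profile (n : nat) (T : 'I_n -> finType) := {dffun forall i, T i}.

(* a^{[n]} : 'I_n -> profile T ; a^s (1-based, cyclically extended) becomes
   a ((s) mod n) in 0-based indexing.  Player i (0-based) at position k
   (0-based, k = 0..n-1) sees profile a ((i + k) mod n). *)
Definition vpay (R : realType) (n : nat) (T : 'I_n -> finType)
  (u : 'I_n -> profile T -> R) (a : 'I_n -> profile T) (D : R) (i : 'I_n) : R :=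
  (\sum_(k < n) D ^+ k * u i (a (insubd i ((i + k) %% n)%N))) /
  (\sum_(k < n) D ^+ k).

Definition Wlam (R : realType) (n : nat) (T : 'I_n -> finType)
  (lam : 'I_n -> R) (u : 'I_n -> profile T -> R) (a : 'I_n -> profile T) (D : R) : R :=
  \sum_(i < n) lam i * vpay u a D i.

Definition is_maximizer (R : realType) (n : nat) (T : 'I_n -> finType)
  (lam : 'I_n -> R) (u : 'I_n -> profile T -> R) (D : R) (a : 'I_n -> profile T) : Prop :=
  forall b : 'I_n -> profile T, Wlam lam u b D <= Wlam lam u a D.

From HB Require Import structures.
From mathcomp Require Import all_boot all_order all_algebra.
From mathcomp Require Import all_classical all_reals all_analysis.
From mathcomp Require Import ring lra.
Import Order.TTheory GRing.Theory Num.Theory numFieldNormedType.Exports.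
Set Implicit Arguments. Unset Strict Implicit. Unset Printing Implicit Defensive.
Local Open Scope ring_scope.

(* W_lambda(a, .) is the normalised discounted sum of the n-periodic stage
   welfare g_k = sum_i lam_i u_i(a^{i+k}), and rotating the cycle a shifts g.
   If a is optimal, no shift of g has a larger discounted mean w.  Unrolling
   the shift by r shows that every initial segment of the deviations
   D^k (g_k - w) has a nonnegative sum, while the full sum is 0.  The
   derivative of the mean has the sign of sum_k k D^k (g_k - w), which by
   Abel summation is minus the sum of those initial segments. *)

Lemma sum_index_weighted (R : pzRingType) (x : nat -> R) N :
  \sum_(m < N) m%:R * x m =
  \sum_(r < N) (\sum_(m < N) x m - \sum_(m < r.+1) x m).
Proof.
elim: N => [|N IH]; first by rewrite !big_ord0.
rewrite big_ord_recr /= IH [in RHS]big_ord_recr /= subrr addr0.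
rewrite [\sum_(m < N.+1) x m]big_ord_recr /=.
have -> : N%:R * x N = \sum_(r < N) x N by rewrite sumr_const card_ord mulr_natl.
by rewrite -big_split; apply: eq_bigr => r _; rewrite addrAC.
Qed.

Lemma sum_index_weighted_le0 (R : numDomainType) (x : nat -> R) N :
  (forall r, (r <= N)%N -> \sum_(m < N) x m <= \sum_(m < r) x m) ->
  \sum_(m < N) m%:R * x m <= 0.
Proof.
move=> le_total_prefix; rewrite sum_index_weighted.
by apply: sumr_le0 => r _; rewrite subr_le0 le_total_prefix.
Qed.

Lemma sum_pow_gt0 (R : numDomainType) (D : R) n :
  0 <= D -> (0 < n)%N -> 0 < \sum_(k < n) D ^+ k.
Proof.
move=> D_ge0 n_gt0; rewrite -(prednK n_gt0) big_ord_recl expr0.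
by rewrite ltr_pwDl // sumr_ge0 // => k _; rewrite exprn_ge0.
Qed.

Lemma discounted_sum_shift (R : comPzRingType) (n : nat) (g : nat -> R)
    (g_periodic : forall m, g (m + n)%N = g m) (D : R) r : (r <= n)%N ->
  D ^+ r * \sum_(k < n) D ^+ k * g (k + r)%N =
  \sum_(k < n) D ^+ k * g k - (1 - D ^+ n) * \sum_(k < r) D ^+ k * g k.
Proof.
move=> le_rn; rewrite -(big_mkord xpredT (fun k => D ^+ k * g (k + r)%N)).
rewrite -!(big_mkord xpredT (fun k => D ^+ k * g k)) mulr_sumr.
have -> : \sum_(0 <= k < n) D ^+ r * (D ^+ k * g (k + r)%N) =
          \sum_(0 + r <= m < n + r) D ^+ m * g m.
  by rewrite big_addn addnK; apply: eq_bigr => k _; rewrite mulrA -exprD addnC.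
rewrite add0n (big_cat_nat le_rn (leq_addr r n)) /=.
have -> : \sum_(n <= m < n + r) D ^+ m * g m =
          D ^+ n * \sum_(0 <= m < r) D ^+ m * g m.
  rewrite -{1}[n]add0n big_addn addKn mulr_sumr.
  by apply: eq_bigr => m _; rewrite g_periodic mulrA -exprD addnC.
rewrite [\sum_(0 <= m < n) _](big_cat_nat (leq0n r) le_rn) /=.
ring.
Qed.

Lemma is_derive_discounted_sum (R : numFieldType) (c : nat -> R) N (x : R) :
  is_derive x 1 (fun d : R => \sum_(k < N) d ^+ k * c k)
    (\sum_(k < N) k%:R * x ^+ k.-1 * c k).
Proof.
have -> : (fun d : R => \sum_(k < N) d ^+ k * c k) =
          \sum_(k < N) (fun d : R => d ^+ k * c k).
  by apply/funext => d; rewrite fct_sumE.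
apply: is_derive_sum => k.
have := is_deriveM (is_deriveX k (is_derive_id x (1 : R))) (is_derive_cst (c k) x 1).
rewrite scaler0 add0r => dk.
have -> : (fun d : R => d ^+ k * c k) = id ^+ k * cst (c k).
  by apply/funext => d; rewrite !fctE.
by apply: is_derive_eq dk _; rewrite scalerA -[_ *: 1]/(_ * 1) mulr1 mulrC.
Qed.

Definition discounted_mean (R : fieldType) (D : R) (n : nat) (g : nat -> R) : R :=
  (\sum_(k < n) D ^+ k * g k) / \sum_(k < n) D ^+ k.

Lemma sum_discounted_deviation (R : comPzRingType) (D w : R) (g : nat -> R) r :
  \sum_(k < r) D ^+ k * (g k - w) =
  \sum_(k < r) D ^+ k * g k - w * \sum_(k < r) D ^+ k.
Proof.
by rewrite mulr_sumr -sumrB; apply: eq_bigr => k _; rewrite mulrBr [w * _]mulrC.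
Qed.

Section MeanMaximalAmongShifts.
Variables (R : realFieldType) (n : nat) (g : nat -> R) (D : R).
Hypotheses (n_gt0 : (0 < n)%N) (D_gt0 : 0 < D) (D_lt1 : D < 1).
Hypothesis g_periodic : forall m, g (m + n)%N = g m.
Hypothesis mean_shift_le :
  forall r, discounted_mean D n (fun k => g (k + r)%N) <= discounted_mean D n g.

Let S_gt0 : 0 < \sum_(k < n) D ^+ k.
Proof. exact: sum_pow_gt0 (ltW D_gt0) n_gt0. Qed.

Let discounted_sum_mean :
  \sum_(k < n) D ^+ k * g k = discounted_mean D n g * \sum_(k < n) D ^+ k.
Proof. by rewrite divfK // lt0r_neq0. Qed.

Lemma discounted_prefix_deviation_ge0 r : (r <= n)%N ->
  0 <= \sum_(k < r) D ^+ k * (g k - discounted_mean D n g).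
Proof.
move=> le_rn; rewrite sum_discounted_deviation subr_ge0.
set w := discounted_mean D n g.
set S := \sum_(k < n) D ^+ k; set P := \sum_(k < n) D ^+ k * g k.
set Sr := \sum_(k < r) D ^+ k; set G := \sum_(k < r) D ^+ k * g k.
have geom m : 1 - D ^+ m = (1 - D) * \sum_(k < m) D ^+ k.
  by rewrite -opprB subrX1 -mulNr opprB.
have : D ^+ r * \sum_(k < n) D ^+ k * g (k + r)%N <= D ^+ r * P.
  rewrite ler_pM2l ?exprn_gt0 //.
  by have := mean_shift_le r; rewrite /discounted_mean ler_pM2r ?invr_gt0.
rewrite discounted_sum_shift // -/P -/G.
have eS : 1 - D ^+ n = (1 - D) * S := geom n.
have eSr : 1 - D ^+ r = (1 - D) * Sr := geom r.
move=> le_shift.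
have : (1 - D) * (Sr * P) <= (1 - D) * (S * G) by nra.
rewrite ler_pM2l ?subr_gt0 // /P discounted_sum_mean -/w -/S.
by rewrite mulrA [Sr * w]mulrC [S * G]mulrC ler_pM2r.
Qed.

Theorem derive_discounted_mean_le0 :
  derive1 (fun d => discounted_mean d n g) D <= 0.
Proof.
set w := discounted_mean D n g.
set S := \sum_(k < n) D ^+ k; set P := \sum_(k < n) D ^+ k * g k.
set S' := \sum_(k < n) k%:R * D ^+ k.-1 * 1.
set P' := \sum_(k < n) k%:R * D ^+ k.-1 * g k.
have dS : is_derive D 1 (fun d : R => \sum_(k < n) d ^+ k) S'.
  have -> : (fun d : R => \sum_(k < n) d ^+ k) = (fun d => \sum_(k < n) d ^+ k * 1).
    by apply/funext => d; under [RHS]eq_bigr do rewrite mulr1.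
  exact: (is_derive_discounted_sum (fun=> 1) n D).
have dV : is_derive D 1 (fun d : R => (\sum_(k < n) d ^+ k)^-1) (- S ^- 2 *: S').
  apply: DeriveDef; first exact: derivableV (lt0r_neq0 S_gt0) _.
  by rewrite deriveV ?derive_val // lt0r_neq0.
have dW : is_derive D 1 (fun d => discounted_mean d n g)
    (P *: (- S ^- 2 *: S') + S^-1 *: P').
  have -> : (fun d => discounted_mean d n g) =
      (fun d => \sum_(k < n) d ^+ k * g k) * (fun d => (\sum_(k < n) d ^+ k)^-1).
    by apply/funext.
  exact: is_deriveM (is_derive_discounted_sum g n D) dV.
rewrite derive1E derive_val.
have -> : P *: (- S ^- 2 *: S') + S^-1 *: P' = S^-1 * (P' - w * S').
  by rewrite /GRing.scale /= /P discounted_sum_mean -/w -/S; field; rewrite lt0r_neq0.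
rewrite pmulr_rle0 ?invr_gt0 // -(pmulr_rle0 _ D_gt0).
have -> : D * (P' - w * S') = \sum_(k < n) k%:R * (D ^+ k * (g k - w)).
  rewrite mulrBr mulrCA !mulr_sumr -sumrB.
  by apply: eq_bigr => -[[|k] _] _ /=; rewrite ?exprS; ring.
apply: (@sum_index_weighted_le0 _ (fun k => D ^+ k * (g k - w))) => r le_rn.
have -> : \sum_(m < n) D ^+ m * (g m - w) = 0.
  by rewrite sum_discounted_deviation discounted_sum_mean subrr.
exact: discounted_prefix_deviation_ge0.
Qed.

End MeanMaximalAmongShifts.

Section RepeatedGame.
Variables (R : realType) (n : nat) (T : 'I_n -> finType).
Variables (lam : 'I_n -> R) (u : 'I_n -> profile T -> R).

Definition stage_welfare (a : 'I_n -> profile T) (k : nat) : R :=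
  \sum_(i < n) lam i * u i (a (insubd i ((i + k) %% n)%N)).

Definition rotate (a : 'I_n -> profile T) (r : nat) : 'I_n -> profile T :=
  fun j => a (insubd j ((j + r) %% n)%N).

Lemma Wlam_discounted_mean a d :
  Wlam lam u a d = discounted_mean d n (stage_welfare a).
Proof.
rewrite /Wlam /vpay /discounted_mean /stage_welfare.
under eq_bigr do rewrite mulrA; rewrite -mulr_suml; congr (_ / _).
under eq_bigr do rewrite mulr_sumr; rewrite exchange_big /=.
by apply: eq_bigr => k _; rewrite mulr_sumr; apply: eq_bigr => i _; rewrite mulrCA.
Qed.

Lemma stage_welfare_periodic a m : stage_welfare a (m + n) = stage_welfare a m.
Proof. by apply: eq_bigr => i _; rewrite addnA modnDr. Qed.

Lemma stage_welfare_rotate a r k :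
  stage_welfare (rotate a r) k = stage_welfare a (k + r).
Proof.
apply: eq_bigr => i _; congr (_ * u i (a _)); apply: val_inj.
have n_gt0 : (0 < n)%N by apply: leq_ltn_trans (ltn_ord i).
by rewrite !val_insubd !ltn_pmod //= modnDml addnA.
Qed.

End RepeatedGame.

Theorem lemma2 (R : realType) (n : nat) (hn : (2 <= n)%N)
  (T : 'I_n -> finType) (hT : forall i, (0 < #|T i|)%N)
  (u : 'I_n -> profile T -> R) (lam : 'I_n -> R) (hlam : exists i, lam i != 0)
  (D : R) (hD0 : 0 < D) (hD1 : D < 1)
  (a : 'I_n -> profile T) (ha : is_maximizer lam u D a) :
  derive1 (fun d : R => Wlam lam u a d) D <= 0.
Proof.
have -> : (fun d => Wlam lam u a d) =
          (fun d => discounted_mean d n (stage_welfare lam u a)).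
  by apply/funext => d; rewrite Wlam_discounted_mean.
apply: derive_discounted_mean_le0 => //; first exact: ltnW.
  exact: stage_welfare_periodic.
move=> r; have -> : (fun k => stage_welfare lam u a (k + r)) =
                    stage_welfare lam u (rotate a r).
  by apply/funext => k; rewrite stage_welfare_rotate.
by rewrite -!Wlam_discounted_mean; exact: ha.
Qed.
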